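(* Let $(u_1,v_1),\ldots,(u_k,v_k)\in\mathbb{R}^2$ and $d\in\mathbb{R}$. Define the symmetric $2^k\times 2^k$ matrix, affine in $x,y,d$, $$L_k(x,y)\;=\;d\cdot I_{2^k}+\begin{bmatrix}x-u_1 & y-v_1\\ y-v_1 & -x+u_1\end{bmatrix}\oplus\cdots\oplus\begin{bmatrix}x-u_k & y-v_k\\ y-v_k & -x+u_k\end{bmatrix}.$$ Then (as polynomial identity, also with $d,u_i,v_i$ treated as indeterminates) $$\det L_k(x,y)\;=\;p_k(x,y):=\prod_{\sigma\in\{0,1\}^k}\Bigl(d-\sum_{i=1}^k(-1)^{\sigma_i}\sqrt{(x-u_i)^2+(y-v_i)^2}\Bigr),$$ and the convex region bounded by the $k$-ellipse satisfies $$\mathcal{E}_k:=\Bigl\{(x,y)\in\mathbb{R}^2:\sum_{i=1}^k\sqrt{(x-u_i)^2+(y-v_i)^2}\le d\Bigr\}=\{(x,y)\in\mathbb{R}^2: L_k(x,y)\succeq 0\}.$$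
   Context: The tensor (Kronecker) sum of an $m\times m$ matrix $A$ and an $n\times n$ matrix $B$ is $A\oplus B:=A\otimes I_n+I_m\otimes B$, an $mn\times mn$ matrix; it is associative, and $M_1\oplus\cdots\oplus M_k=\sum_{j}I\otimes\cdots\otimes M_j\otimes\cdots\otimes I$. $\succeq 0$ means positive semidefinite. *)

From HB Require Import structures.
From mathcomp Require Import all_boot all_order all_algebra.
From mathcomp Require Import mxtens.
From mathcomp Require Import reals.
Set Implicit Arguments. Unset Strict Implicit. Unset Printing Implicit Defensive.
Import Order.TTheory GRing.Theory Num.Theory.
Local Open Scope ring_scope.

(* Tensor (Kronecker) sum  A (+) B := A (x) I_n + I_m (x) B  (Kronecker product
   = mxtens.tensmx, standard row-major ordering of index pairs). *)
Definition tenssum (R : pzRingType) (m n : nat) (A : 'M[R]_m) (B : 'M[R]_n)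
  : 'M[R]_(m * n) :=
  tensmx A (1%:M : 'M[R]_n) + tensmx (1%:M : 'M[R]_m) B.

(* M_1 (+) (M_2 (+) ( ... (+) M_k)) for the family M_0, ..., M_{k-1}
   (indexed from 0); the empty tensor sum is the 1x1 zero matrix
   (neutral for (+)).  The dimension 2 * 2^k' is cast to 2^(k'.+1). *)
Fixpoint tenssum_seq (R : pzRingType) (k : nat) (M : nat -> 'M[R]_2)
  : 'M[R]_(2 ^ k) :=
  match k return 'M[R]_(2 ^ k) with
  | 0 => 0
  | k'.+1 => castmx (esym (expnS 2 k'), esym (expnS 2 k'))
              (tenssum (M 0%N) (tenssum_seq k' (fun i => M i.+1)))
  end.

Definition blk (R : pzRingType) (x y u v : R) : 'M[R]_2 :=
  \matrix_(i < 2, j < 2)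
    if (i == 0) && (j == 0) then x - u
    else if (i == 1) && (j == 1) then - x + u
    else y - v.

Definition Lk (R : pzRingType) (k : nat) (u v : nat -> R) (d x y : R)
  : 'M[R]_(2 ^ k) :=
  d%:M + tenssum_seq k (fun i => blk x y (u i) (v i)).

Definition psd (R : numDomainType) (n : nat) (A : 'M[R]_n) : Prop :=
  A^T = A /\ forall z : 'cV[R]_n, 0 <= (z^T *m A *m z) 0 0.

From HB Require Import structures.
From mathcomp Require Import all_boot all_order all_algebra.
From mathcomp Require Import mxtens.
From mathcomp Require Import reals.
From mathcomp Require Import ring lra.
Set Implicit Arguments.
Unset Strict Implicit.
Unset Printing Implicit Defensive.
Import Order.TTheory GRing.Theory Num.Theory.
Local Open Scope ring_scope.

(* Each block [[a, b], [b, -a]] is a reflection scaled by r = sqrt (a^2 + b^2), hence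
   orthogonally similar to diag (-r, r).  Orthogonal diagonalizations pass through tensor
   sums: if A = P D P^T and B = Q E Q^T then A (+) B = (P (x) Q) (D (+) E) (P (x) Q)^T, and
   D (+) E is diagonal with all sums of an eigenvalue of A and one of B.  So L_k is
   orthogonally similar to the diagonal matrix with entries d - sum_i (-1)^(s_i) r_i, one for
   each sign vector s.  Its determinant is their product, and it is positive semidefinite iff
   all of them are nonnegative, i.e. iff the smallest one, d - sum_i r_i, is. *)

Section Tensor.
Variable R : comPzRingType.

Lemma tensmx_diag m n (a : 'rV[R]_m) (b : 'rV[R]_n) :
  diag_mx a *t diag_mx b =
  diag_mx (\row_k (a 0 (mxtens_unindex k).1 * b 0 (mxtens_unindex k).2)).
Proof.
apply/matrixP => i j.
case: (mxtens_indexP i) => i0 i1; case: (mxtens_indexP j) => j0 j1.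
rewrite tensmxE !mxE mxtens_indexK /= (inj_eq (can_inj (@mxtens_indexK m n))) xpair_eqE.
by case: eqP; case: eqP; rewrite ?mulr0n ?mulr1n ?mulr0 ?mul0r.
Qed.

Lemma tensmx11 m n : (1%:M : 'M[R]_m) *t (1%:M : 'M[R]_n) = 1%:M.
Proof.
by rewrite -!diag_const_mx tensmx_diag; congr diag_mx; apply/rowP => k; rewrite !mxE mulr1.
Qed.

End Tensor.

Section OrthoDiag.
Variable R : comPzRingType.

(* [lam] lists the eigenvalues of [T], with multiplicity; equality of the two
   multisets is encoded by comparing products of arbitrary functions of them. *)
Definition orthodiag n (T : 'M[R]_n) (I : finType) (lam : I -> R) :=
  exists (Q : 'M[R]_n) (e : 'rV[R]_n), Q *m Q^T = 1%:M /\
    T = Q *m diag_mx e *m Q^T /\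
    forall F : R -> R, \prod_j F (e 0 j) = \prod_i F (lam i).

Lemma orthodiag_conj n (Q : 'M[R]_n) (e : 'rV[R]_n) :
  Q *m Q^T = 1%:M -> orthodiag (Q *m diag_mx e *m Q^T) (fun j => e 0 j).
Proof. by move=> QQt; exists Q, e. Qed.

Lemma orthodiag_reindex n (T : 'M[R]_n) (I J : finType) (lam : I -> R)
    (mu : J -> R) (h : J -> I) :
  bijective h -> (forall j, mu j = lam (h j)) ->
  orthodiag T lam -> orthodiag T mu.
Proof.
move=> hbij lam_mu [Q [e [QQt [defT eq_e]]]]; exists Q, e; do 2!split => //.
move=> F; rewrite eq_e (reindex h) /=; last exact: onW_bij.
by apply: eq_bigr => j _; rewrite lam_mu.
Qed.

Lemma orthodiag_cast n n' (eq_n : n = n') (T : 'M[R]_n) (I : finType)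
    (lam : I -> R) :
  orthodiag T lam -> orthodiag (castmx (eq_n, eq_n) T) lam.
Proof. by case: n' / eq_n; rewrite castmx_id. Qed.

Lemma orthodiag_add_scalar n (T : 'M[R]_n) (I : finType) (lam : I -> R) d :
  orthodiag T lam -> orthodiag (d%:M + T) (fun i => d + lam i).
Proof.
move=> [Q [e [QQt [-> eq_e]]]]; exists Q, (\row_j (d + e 0 j)); split=> //; split.
  have -> : (d%:M : 'M[R]_n) = Q *m d%:M *m Q^T.
    by rewrite mul_mx_scalar -scalemxAl QQt scalemx1.
  rewrite -mulmxDl -mulmxDr -diag_const_mx -raddfD /=.
  by congr (_ *m diag_mx _ *m _); apply/rowP => j; rewrite !mxE.
by move=> F; rewrite -(eq_e (fun t => F (d + t))); apply: eq_bigr => j _; rewrite mxE.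
Qed.

Lemma orthodiag_tenssum m n (A : 'M[R]_m) (B : 'M[R]_n) (I J : finType)
    (lamA : I -> R) (lamB : J -> R) :
  orthodiag A lamA -> orthodiag B lamB ->
  orthodiag (tenssum A B) (fun ij : I * J => lamA ij.1 + lamB ij.2).
Proof.
move=> [QA [a [QAt [-> eq_a]]]] [QB [b [QBt [-> eq_b]]]].
exists (QA *t QB), (\row_k (a 0 (mxtens_unindex k).1 + b 0 (mxtens_unindex k).2)).
split; first by rewrite trmx_tens tensmx_mul QAt QBt tensmx11.
split.
  rewrite /tenssum.
  have -> : (QA *m diag_mx a *m QA^T) *t 1%:M =
             (QA *t QB) *m (diag_mx a *t 1%:M) *m (QA *t QB)^T.
    by rewrite trmx_tens !tensmx_mul mulmx1 QBt.
  have -> : 1%:M *t (QB *m diag_mx b *m QB^T) =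
             (QA *t QB) *m (1%:M *t diag_mx b) *m (QA *t QB)^T.
    by rewrite trmx_tens !tensmx_mul mulmx1 QAt.
  rewrite -mulmxDl -mulmxDr -!diag_const_mx !tensmx_diag -raddfD /=.
  by congr (_ *m diag_mx _ *m _); apply/rowP => k; rewrite !mxE mulr1 mul1r.
move=> F; transitivity (\prod_(i < m) \prod_(j < n) F (a 0 i + b 0 j)).
  rewrite pair_bigA (reindex (@mxtens_index m n)).
    by apply: eq_bigr => ij _; rewrite mxE mxtens_indexK.
  by exists (@mxtens_unindex m n) => k _; rewrite (mxtens_indexK, mxtens_unindexK).
rewrite -[RHS](pair_bigA _ (fun i j => F (lamA i + lamB j))).
rewrite -(eq_a (fun t => \prod_j F (t + lamB j))).
by apply: eq_bigr => i _; apply: (eq_b (fun t => F (a 0 i + t))).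
Qed.

Lemma det_orthodiag n (T : 'M[R]_n) (I : finType) (lam : I -> R) :
  orthodiag T lam -> \det T = \prod_i lam i.
Proof.
move=> [Q [e [QQt [-> eq_e]]]].
by rewrite !det_mulmx mulrAC -det_mulmx QQt det1 mul1r det_diag (eq_e id).
Qed.

End OrthoDiag.

Section Psd.
Variable R : realDomainType.

Lemma prod_indicator_eq1 (I : finType) (P : pred I) :
  \prod_i (P i)%:R = 1 :> R <-> forall i, P i.
Proof.
split=> [prod1 i | allP]; last by rewrite big1 // => i _; rewrite allP.
apply/negPn/negP => nPi; move: prod1.
by rewrite (bigD1 i) //= (negbTE nPi) mul0r => /eqP; rewrite eq_sym oner_eq0.
Qed.

Lemma eq_prod_fun_all (I J : finType) (e : I -> R) (lam : J -> R) (P : pred R) :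
  (forall F : R -> R, \prod_i F (e i) = \prod_j F (lam j)) ->
  (forall i, P (e i)) <-> (forall j, P (lam j)).
Proof.
move=> eq_e; split=> /(prod_indicator_eq1 (fun _ => P _)) prod1;
  apply/(prod_indicator_eq1 (fun _ => P _)).
  by rewrite -(eq_e (fun t => (P t)%:R)).
by rewrite (eq_e (fun t => (P t)%:R)).
Qed.

Lemma psd_conj_diag n (Q : 'M[R]_n) (e : 'rV[R]_n) :
  Q *m Q^T = 1%:M -> psd (Q *m diag_mx e *m Q^T) <-> forall j, 0 <= e 0 j.
Proof.
move=> QQt; have QtQ := mulmx1C QQt; split.
  move=> [_ form_ge0] j; have := form_ge0 (Q *m delta_mx j 0).
  rewrite !trmx_mul !mulmxA -(mulmxA _ Q^T Q) QtQ mulmx1 -(mulmxA _ Q^T Q) QtQ mulmx1.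
  by rewrite trmx_delta -rowE -colE !mxE eqxx mulr1n.
move=> e_ge0; split; first by rewrite !trmx_mul trmxK tr_diag_mx mulmxA.
move=> z; set w := Q^T *m z.
have -> : z^T *m (Q *m diag_mx e *m Q^T) *m z = w^T *m (diag_mx e *m w).
  by rewrite /w trmx_mul trmxK !mulmxA.
rewrite mul_diag_mx mxE; apply: sumr_ge0 => i _; rewrite !mxE.
by rewrite mulrCA mulr_ge0 // -expr2 sqr_ge0.
Qed.

Lemma psd_orthodiag n (T : 'M[R]_n) (I : finType) (lam : I -> R) :
  orthodiag T lam -> psd T <-> forall i, 0 <= lam i.
Proof.
move=> [Q [e [QQt [-> eq_e]]]]; rewrite psd_conj_diag //.
exact: (eq_prod_fun_all (fun t => 0 <= t) eq_e).
Qed.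

Lemma signed_sums_le k (r : 'I_k -> R) (d : R) : (forall i, 0 <= r i) ->
  (forall s : {ffun 'I_k -> bool}, \sum_i (-1) ^+ s i * r i <= d) <->
  \sum_i r i <= d.
Proof.
move=> r_ge0; split=> [/(_ [ffun=> false]) | le_sum_d s].
  by under eq_bigr do rewrite ffunE expr0 mul1r.
apply: le_trans le_sum_d; apply: ler_sum => i _.
by case: (s i); rewrite ?expr1 ?mulN1r ?mul1r // -subr_ge0 opprK addr_ge0.
Qed.

End Psd.

Section Block.
Variable R : rcfType.

Lemma polar_double_angle (a b : R) :
  let r := Num.sqrt (a ^+ 2 + b ^+ 2) in
  exists c s : R, c ^+ 2 + s ^+ 2 = 1 /\
    a = r * (c ^+ 2 - s ^+ 2) /\ b = r * (c * s *+ 2).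
Proof.
move=> r.
have r2 : r ^+ 2 = a ^+ 2 + b ^+ 2 by rewrite sqr_sqrtr // addr_ge0 ?sqr_ge0.
set D := (a + r) ^+ 2 + b ^+ 2.
have [D0 | D_neq0] := eqVneq D 0.
  have /andP[/eqP ar0 /eqP b0] : ((a + r) ^+ 2 == 0) && (b ^+ 2 == 0).
    by rewrite -paddr_eq0 ?sqr_ge0 // -/D D0.
  move: ar0 b0 => /eqP; rewrite sqrf_eq0 => /eqP ar0 /eqP; rewrite sqrf_eq0 => /eqP b0.
  exists 0, 1; rewrite b0 expr0n expr1n /= add0r mul0r mul0rn mulr0.
  by split=> //; split=> //; lra.
(* Normalise the vector (a + r, b), which bisects the angle between (1, 0) and (a, b). *)
set N := Num.sqrt D; have N2 : N ^+ 2 = D by rewrite sqr_sqrtr // addr_ge0 ?sqr_ge0.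
have N2_neq0 : N ^+ 2 != 0 by rewrite N2.
exists ((a + r) / N), (b / N); rewrite !expr_div_n -mulrDl -mulrBl N2 divff //.
have solveD (t P : R) : t * D = P -> t = P / D by move=> <-; rewrite mulfK.
split=> //; split.
  rewrite mulrA; apply: solveD.
  apply/eqP; rewrite -subr_eq0; apply/eqP.
  transitivity ((a + r) * (a ^+ 2 + b ^+ 2 - r ^+ 2)); first by rewrite /D; ring.
  by rewrite r2 subrr mulr0.
rewrite mulf_div -expr2 N2 -mulrnAl mulrA; apply: solveD.
apply/eqP; rewrite -subr_eq0; apply/eqP.
transitivity (b * (a ^+ 2 + b ^+ 2 - r ^+ 2)); first by rewrite /D; ring.
by rewrite r2 subrr mulr0.
Qed.

Lemma blk_orthodiag (x y u v : R) :
  let r := Num.sqrt ((x - u) ^+ 2 + (y - v) ^+ 2) in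
  orthodiag (blk x y u v) (fun b : bool => - ((-1) ^+ b * r)).
Proof.
move=> r; have [c [s [cs1 [ea eb]]]] := polar_double_angle (x - u) (y - v).
rewrite -/r in ea eb.
pose Q : 'M[R]_2 := \matrix_(i, j)
  if i == 0 then (if j == 0 then - s else c) else (if j == 0 then c else s).
pose e : 'rV[R]_2 := \row_j - ((-1) ^+ (j != 0 :> 'I_2) * r).
have QQt : Q *m Q^T = 1%:M.
  apply/matrixP => i j; rewrite !mxE !big_ord_recl big_ord0 !mxE.
  by case: i => [[|[|//]] Hi]; case: j => [[|[|//]] Hj] /=; nra.
have -> : blk x y u v = Q *m diag_mx e *m Q^T.
  apply/matrixP => i j; rewrite !mxE !big_ord_recl !big_ord0 !mxE.
  rewrite !big_ord_recl !big_ord0 !mxE.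
  case: i => [[|[|//]] Hi]; case: j => [[|[|//]] Hj] /=;
    rewrite ?expr0 ?expr1 ?mulr1n ?mulr0n; nra.
apply: (orthodiag_reindex (h := fun b : bool => if b then 1 else 0))
  (orthodiag_conj e QQt).
- exists (fun j : 'I_2 => j != 0) => [[]|j] //.
  by case: j => [[|[|//]] Hj]; apply: val_inj.
- by case=> /=; rewrite mxE.
Qed.

Lemma tenssum_seq_blk_orthodiag k (u v : nat -> R) (x y : R) :
  orthodiag (tenssum_seq k (fun i => blk x y (u i) (v i)))
    (fun s : {ffun 'I_k -> bool} =>
       - \sum_(i < k) (-1) ^+ s i * Num.sqrt ((x - u i) ^+ 2 + (y - v i) ^+ 2)).
Proof.
elim: k u v => [|k IH] u v /=.
  have id_orth : (1%:M : 'M[R]_1) *m 1%:M^T = 1%:M by rewrite trmx1 mulmx1.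
  have := orthodiag_conj 0 id_orth.
  rewrite mul1mx trmx1 mulmx1 linear0.
  apply: (orthodiag_reindex (h := fun _ => ord0)) => [|s]; last first.
    by rewrite big_ord0 oppr0 mxE.
  exists (fun _ => [ffun=> false]) => [s | j]; last by rewrite (ord1 j).
  by apply/ffunP => i; have := ltn_ord i.
apply: orthodiag_cast.
have := orthodiag_tenssum (blk_orthodiag x y (u 0%N) (v 0%N))
  (IH (fun i => u i.+1) (fun i => v i.+1)).
pose split_head (s : {ffun 'I_k.+1 -> bool}) : bool * {ffun 'I_k -> bool} :=
  (s ord0, [ffun j => s (lift ord0 j)]).
apply: (orthodiag_reindex (h := split_head)).
  exists (fun bs : bool * {ffun 'I_k -> bool} =>
    [ffun i => if unlift ord0 i is Some j then bs.2 j else bs.1]).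
    move=> s; apply/ffunP => i; rewrite ffunE /split_head.
    by case: unliftP => [j ->|->] //; rewrite ffunE.
  case=> b s; rewrite /split_head ffunE unlift_none; congr pair.
  by apply/ffunP => j; rewrite !ffunE liftK.
move=> s; rewrite /split_head big_ord_recl opprD; congr (_ - _).
by apply: eq_bigr => i _; rewrite ffunE lift0.
Qed.

End Block.

Lemma Lk_orthodiag (R : rcfType) k (u v : nat -> R) (d x y : R) :
  orthodiag (Lk k u v d x y) (fun s : {ffun 'I_k -> bool} =>
    d - \sum_(i < k) (-1) ^+ s i * Num.sqrt ((x - u i) ^+ 2 + (y - v i) ^+ 2)).
Proof. exact: orthodiag_add_scalar (tenssum_seq_blk_orthodiag k u v x y). Qed.

Theorem theorem2p3 (R : realType) (k : nat) (u v : nat -> R) (d : R) :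
  (forall x y : R,
     \det (Lk k u v d x y) =
     \prod_(s : {ffun 'I_k -> bool})
        (d - \sum_(i < k) (-1) ^+ (s i : nat) *
               Num.sqrt ((x - u i) ^+ 2 + (y - v i) ^+ 2)))
  /\
  (forall x y : R,
     (\sum_(i < k) Num.sqrt ((x - u i) ^+ 2 + (y - v i) ^+ 2) <= d)
     <-> psd (Lk k u v d x y)).
Proof.
split=> x y; have spectrum := Lk_orthodiag k u v d x y.
  exact: det_orthodiag spectrum.
rewrite (psd_orthodiag spectrum) -signed_sums_le => [|i]; last exact: sqrtr_ge0.
by split=> le_d s; have := le_d s; rewrite subr_ge0.
Qed.
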